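(* Every Brauer field is semi-perfect.
   Context: A field $k$ is a Brauer field if for every $d\ge 1$ there is a number $N_k(d)$ such that every equation $a_1x_1^d+\cdots+a_nx_n^d=0$ with $n>N_k(d)$ and $a_i\in k$ has a non-trivial solution in $k^n$. A field $k$ is semi-perfect if it has characteristic $0$, or it has characteristic $p>0$ and the degree $[k:k^{p^n}]$ is finite for all $n\ge 1$. *)

From mathcomp Require Import all_boot all_algebra.
Set Implicit Arguments. Unset Strict Implicit. Unset Printing Implicit Defensive.
Import GRing.Theory.
Local Open Scope ring_scope.

Definition brauer_field (k : fieldType) : Prop :=
  forall d : nat, (1 <= d)%N ->
    exists N : nat, forall n : nat, (N < n)%N ->
      forall a : 'I_n -> k,
        exists x : 'I_n -> k, (exists i, x i != 0) /\
          \sum_(i < n) a i * x i ^+ d = 0.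

(* [k : k^q] is finite, where k^q = { y^q | y in k } (q = p^n): k is spanned,
   as a vector space over the subfield k^q, by finitely many elements. *)
Definition finite_degree_over_pow (k : fieldType) (q : nat) : Prop :=
  exists s : seq k, forall x : k,
    exists c : 'I_(size s) -> k, x = \sum_(i < size s) (c i) ^+ q * s`_i.

Definition semi_perfect (k : fieldType) : Prop :=
  [pchar k] =i pred0 \/
  exists p : nat, p \in [pchar k] /\
    forall n : nat, (1 <= n)%N -> finite_degree_over_pow k (p ^ n).

From mathcomp Require Import all_boot all_algebra.
From Stdlib Require Import Classical.
Set Implicit Arguments. Unset Strict Implicit. Unset Printing Implicit Defensive.
Import GRing.Theory.
Local Open Scope ring_scope.

(* If [k] had infinite degree over [k^q], where [q] is a power of the
   characteristic, we could pick arbitrarily many elements [s_1, ..., s_m] of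
   [k] linearly independent over the subfield [k^q]. Independence says exactly
   that the diagonal form [s_1 x_1^q + ... + s_m x_m^q] has only the trivial
   zero, contradicting the Brauer property for [d = q]. *)

Section PowerSpan.
Variables (k : fieldType) (q : nat).

Definition pow_span (s : seq k) (x : k) : Prop :=
  exists c : 'I_(size s) -> k, x = \sum_(i < size s) c i ^+ q * s`_i.

Definition pow_free (s : seq k) : Prop :=
  forall c : 'I_(size s) -> k, \sum_(i < size s) c i ^+ q * s`_i = 0 ->
    forall i, c i = 0.

(* Makes [k^q] closed under negation; holds for [q] odd or a power of the
   characteristic. *)
Hypotheses (q_gt0 : (0 < q)%N) (opp1_expq : (-1 : k) ^+ q = -1).

Lemma pow_span_of_dependent s x (c : 'I_(size s).+1 -> k) :
  c ord0 != 0 ->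
  c ord0 ^+ q * x + \sum_(i < size s) c (lift ord0 i) ^+ q * s`_i = 0 ->
  pow_span s x.
Proof.
move=> c0_neq0 dep_c.
have cq0_neq0 : c ord0 ^+ q != 0 by rewrite expf_neq0.
exists (fun i => - c (lift ord0 i) / c ord0).
have -> : x = - (\sum_(i < size s) c (lift ord0 i) ^+ q * s`_i) / c ord0 ^+ q.
  apply: (mulIf cq0_neq0); rewrite mulfVK //.
  by apply/eqP; rewrite mulrC -addr_eq0 dep_c.
rewrite -sumrN mulr_suml; apply: eq_bigr => i _.
by rewrite -mulN1r -[- c _]mulN1r !exprMn opp1_expq exprVn !mulN1r !mulNr mulrAC.
Qed.

Lemma pow_free_cons s x : pow_free s -> ~ pow_span s x -> pow_free (x :: s).
Proof.
move=> free_s x_notin c /=; rewrite big_ord_recl /= => dep_c.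
have c0 : c ord0 = 0.
  by apply/eqP; apply: contra_notT x_notin => /pow_span_of_dependent; apply.
move: dep_c; rewrite c0 expr0n gtn_eqF // mul0r add0r => /free_s free_c i.
by case: (unliftP ord0 i) => [j ->|->].
Qed.

Lemma pow_free_of_infinite_degree :
  ~ finite_degree_over_pow k q -> forall m, exists s, size s = m /\ pow_free s.
Proof.
move=> infinite; elim=> [|m [s [size_s free_s]]].
  by exists [::]; split => // c _ [].
have [x x_notin] : exists x, ~ pow_span s x.
  by apply: not_all_ex_not => span_s; apply: infinite; exists s.
by exists (x :: s); rewrite /= size_s; split; last exact: pow_free_cons.
Qed.

End PowerSpan.

Lemma brauer_pow_free_bounded (k : fieldType) q : brauer_field k -> (0 < q)%N ->
  exists N, forall s : seq k, pow_free q s -> (size s <= N)%N.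
Proof.
move=> brauer q_gt0; have [N zeroN] := brauer q q_gt0.
exists N => s free_s; rewrite leqNgt; apply/negP => /zeroN/(_ (nth 0 s)).
case=> x [[i /eqP xi_neq0] zero_x]; apply/xi_neq0/free_s.
by rewrite -[RHS]zero_x; apply: eq_bigr => j _; rewrite mulrC.
Qed.

Lemma brauer_finite_degree_over_pow (k : fieldType) q :
  brauer_field k -> (0 < q)%N -> (-1 : k) ^+ q = -1 ->
  finite_degree_over_pow k q.
Proof.
move=> brauer q_gt0 opp1_expq; apply: NNPP => infinite.
have [N bounded] := brauer_pow_free_bounded brauer q_gt0.
have [s [size_s free_s]] := pow_free_of_infinite_degree q_gt0 opp1_expq infinite N.+1.
by have := bounded s free_s; rewrite size_s ltnn.
Qed.

Lemma opp1_expn_pchar (k : fieldType) p n :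
  p \in [pchar k] -> (-1 : k) ^+ (p ^ n) = -1.
Proof.
move=> pchar_p; rewrite exprNn_pchar ?expr1n //.
by rewrite (eq_pnat _ (pcharf_eq pchar_p)) pnatX pnat_id ?(pcharf_prime pchar_p).
Qed.

Theorem proposition2p9 (k : fieldType) : brauer_field k -> semi_perfect k.
Proof.
move=> brauer.
have [[p pchar_p] | no_pchar] := classic (exists p, p \in [pchar k]); last first.
  by left => p; apply/negP => pchar_p; apply: no_pchar; exists p.
right; exists p; split => // n _.
apply: brauer_finite_degree_over_pow => //; last exact: opp1_expn_pchar.
by rewrite expn_gt0 prime_gt0 ?(pcharf_prime pchar_p).
Qed.
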